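(* Let $L=E[C_1,\dots,C_n]$ be a congruence uniform lattice, i.e. each $C_i$ is an interval of $E[C_1,\dots,C_{i-1}]$. Then $L$ is left modular if and only if, for every $i\in[n]$, $C_i$ contains an element of the spine of $E[C_1,\dots,C_{i-1}]$.
   Context: All lattices are finite. For a convex subset $C$ of a lattice $L$, let $I_L(C)=\{y\in L\mid\exists x\in C,\ y\le x\}$, and the doubling $L[C]$ is the subposet of $L\times\{0<1\}$ on $\big(I_L(C)\times\{0\}\big)\sqcup\big(((L\setminus I_L(C))\cup C)\times\{1\}\big)$. $E[\,]$ is the one-element lattice and $E[C_1,\dots,C_{i+1}]:=E[C_1,\dots,C_i][C_{i+1}]$ with $C_{i+1}$ a nonempty interval of $E[C_1,\dots,C_i]$. The spine of a poset is the set of elements lying on some chain of maximum length. An element $a$ is left modular if for all $b<c$, $(b\vee a)\wedge c=b\vee(a\wedge c)$; a lattice is left modular if it has a maximal chain consisting of left modular elements. *)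

(* E[C_1,...,C_i] is realised as a subset of {0,1}^n (functions 'I_n -> bool),
   ordered componentwise: the doubling L[C] is by definition a subposet of
   L x {0<1}, so E[C_1..C_i] is a subposet of {0<1}^i; we pad the unused
   coordinates i..n-1 with false.  Coordinate i (0-based) records the i-th
   doubling (doubling by the paper's C_{i+1}). *)
From HB Require Import structures.
From mathcomp Require Import all_boot all_order.
Set Implicit Arguments. Unset Strict Implicit. Unset Printing Implicit Defensive.

Section Doubling.
Variable n : nat.
Definition pt := {ffun 'I_n -> bool}.

Definition ple (x y : pt) : bool := [forall k, x k ==> y k].
Definition plt (x y : pt) : bool := (x != y) && ple x y.

Definition getc (z : pt) (i : nat) : bool := [exists k, (val k == i) && z k].
Definition setc (z : pt) (i : nat) (b : bool) : pt :=
  [ffun k => if val k == i then b else z k].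

Definition bot_pt : pt := [ffun => false].

Definition downset (L C : {set pt}) : {set pt} :=
  [set y in L | [exists x in C, ple y x]].

Definition double (L C : {set pt}) (i : nat) : {set pt} :=
  [set z | ((~~ getc z i) && (setc z i false \in downset L C))
        || (getc z i && (setc z i false \in (L :\: downset L C) :|: C))].

(* E[C_0, ..., C_(i-1)] (0-based indices) *)
Fixpoint Elat (C : nat -> {set pt}) (i : nat) : {set pt} :=
  match i with
  | 0 => [set bot_pt]
  | j.+1 => double (Elat C j) (C j) j
  end.

Definition is_interval (L C : {set pt}) : Prop :=
  exists a b, [/\ a \in L, b \in L, ple a b &
                  C = [set x in L | ple a x && ple x b]].

Definition chain (P S : {set pt}) : bool :=
  (S \subset P) && [forall x in S, forall y in S, ple x y || ple y x].
Definition max_chain (P S : {set pt}) : Prop :=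
  chain P S /\ forall S', chain P S' -> S \subset S' -> S' = S.
Definition spine (P : {set pt}) : {set pt} :=
  [set x in P | [exists S : {set pt},
     [&& chain P S, x \in S & [forall S' : {set pt}, chain P S' ==> (#|S'| <= #|S|)]]]].

Definition is_lub (P : {set pt}) (x y z : pt) : bool :=
  [&& z \in P, ple x z, ple y z & [forall w in P, ple x w ==> ple y w ==> ple z w]].
Definition is_glb (P : {set pt}) (x y z : pt) : bool :=
  [&& z \in P, ple z x, ple z y & [forall w in P, ple w x ==> ple w y ==> ple w z]].
Definition pjoin (P : {set pt}) (x y : pt) : pt := odflt x [pick z | is_lub P x y z].
Definition pmeet (P : {set pt}) (x y : pt) : pt := odflt x [pick z | is_glb P x y z].

Definition left_modular_elt (P : {set pt}) (a : pt) : Prop :=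
  forall b c, b \in P -> c \in P -> plt b c ->
    pmeet P (pjoin P b a) c = pjoin P b (pmeet P a c).

Definition left_modular (P : {set pt}) : Prop :=
  exists S, max_chain P S /\ forall a, a \in S -> left_modular_elt P a.

End Doubling.

From Pilot Require Import Defs.
From HB Require Import structures.
From mathcomp Require Import all_boot all_order.
Set Implicit Arguments. Unset Strict Implicit. Unset Printing Implicit Defensive.

(* Left modularity of a lattice is decided by its spine: if [m] is a maximal chain of left
   modular elements and [y < z], left modularity of the first [x] in [m] with [z <= y \/ x] and
   of its predecessor in [m] shows that [x |-> x /\ y] takes fewer values on [m] than
   [x |-> x /\ z]; so [m] is a longest chain. Conversely a longest chain is maximal and lies in
   the spine.
   Doubling [L] at [C = [a, b]] preserves and reflects left modularity, from [x <= b] to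
   [(x, 0)] and from [x >= a] to [(x, 1)]. If [C] meets the spine of [L], a longest chain of
   [L[C]] is a longest chain of [L] in which one element, necessarily in [C], is doubled; so the
   spine of [L[C]] lies over the spine of [L]. Conversely, if [m'] is a left modular maximal
   chain of [L[C]], its projection is a left modular maximal chain of [L], hence a longest one,
   and it contains the projection of the lowest element of [m'] in the upper copy, which lies in
   [C]. *)

(** * Lattices of points *)

Section Lattices.
Variable n : nat.
Implicit Types (x y z w : pt n) (P : {set pt n}).

Lemma ple_refl x : ple x x.
Proof. by apply/forallP=> k; apply/implyP. Qed.

Lemma ple_trans y x z : ple x y -> ple y z -> ple x z.
Proof.
move=> /forallP xy /forallP yz; apply/forallP=> k; apply/implyP=> xk.
by move/implyP: (yz k); apply; move/implyP: (xy k); apply.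
Qed.

Lemma ple_anti x y : ple x y -> ple y x -> x = y.
Proof.
move=> /forallP xy /forallP yx; apply/ffunP=> k.
by move: (xy k) (yx k); case: (x k); case: (y k).
Qed.

Lemma ple_bot x : ple (bot_pt n) x.
Proof. by apply/forallP=> k; rewrite ffunE. Qed.

Definition is_lattice P := forall x y, x \in P -> y \in P ->
  (exists z, is_lub P x y z) /\ (exists z, is_glb P x y z).

Lemma lub_uniq P x y z z' : is_lub P x y z -> is_lub P x y z' -> z = z'.
Proof.
case/and4P=> zP xz yz /forall_inP zleast; case/and4P=> zP' xz' yz' /forall_inP zleast'.
apply: ple_anti.
  by move/implyP: (zleast z' zP') => /(_ xz') /implyP /(_ yz').
by move/implyP: (zleast' z zP) => /(_ xz) /implyP /(_ yz).
Qed.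

Lemma glb_uniq P x y z z' : is_glb P x y z -> is_glb P x y z' -> z = z'.
Proof.
case/and4P=> zP zx zy /forall_inP zgreat; case/and4P=> zP' zx' zy' /forall_inP zgreat'.
apply: ple_anti.
  by move/implyP: (zgreat' z zP) => /(_ zx) /implyP /(_ zy).
by move/implyP: (zgreat z' zP') => /(_ zx') /implyP /(_ zy').
Qed.

Section Lattice.
Variable P : {set pt n}.
Hypothesis latP : is_lattice P.

Lemma pjoinP x y : x \in P -> y \in P -> is_lub P x y (pjoin P x y).
Proof.
move=> xP yP; rewrite /pjoin; case: pickP => [z //|nolub].
by case: (latP xP yP) => [[z xyz] _]; move: (nolub z); rewrite xyz.
Qed.

Lemma pmeetP x y : x \in P -> y \in P -> is_glb P x y (pmeet P x y).
Proof.
move=> xP yP; rewrite /pmeet; case: pickP => [z //|noglb].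
by case: (latP xP yP) => [_ [z xyz]]; move: (noglb z); rewrite xyz.
Qed.

Lemma pjoin_eq x y z : x \in P -> y \in P -> is_lub P x y z -> pjoin P x y = z.
Proof. by move=> xP yP; apply: lub_uniq; apply: pjoinP. Qed.

Lemma pmeet_eq x y z : x \in P -> y \in P -> is_glb P x y z -> pmeet P x y = z.
Proof. by move=> xP yP; apply: glb_uniq; apply: pmeetP. Qed.

Lemma pjoin_in x y : x \in P -> y \in P -> pjoin P x y \in P.
Proof. by move=> xP yP; case/and4P: (pjoinP xP yP). Qed.

Lemma pmeet_in x y : x \in P -> y \in P -> pmeet P x y \in P.
Proof. by move=> xP yP; case/and4P: (pmeetP xP yP). Qed.

Lemma pjoin_l x y : x \in P -> y \in P -> ple x (pjoin P x y).
Proof. by move=> xP yP; case/and4P: (pjoinP xP yP). Qed.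

Lemma pjoin_r x y : x \in P -> y \in P -> ple y (pjoin P x y).
Proof. by move=> xP yP; case/and4P: (pjoinP xP yP). Qed.

Lemma pmeet_l x y : x \in P -> y \in P -> ple (pmeet P x y) x.
Proof. by move=> xP yP; case/and4P: (pmeetP xP yP). Qed.

Lemma pmeet_r x y : x \in P -> y \in P -> ple (pmeet P x y) y.
Proof. by move=> xP yP; case/and4P: (pmeetP xP yP). Qed.

Lemma pjoin_least x y w : x \in P -> y \in P -> w \in P ->
  ple x w -> ple y w -> ple (pjoin P x y) w.
Proof.
move=> xP yP wP xw yw; case/and4P: (pjoinP xP yP) => _ _ _ /forall_inP least.
by move/implyP: (least w wP) => /(_ xw) /implyP /(_ yw).
Qed.

Lemma pmeet_greatest x y w : x \in P -> y \in P -> w \in P ->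
  ple w x -> ple w y -> ple w (pmeet P x y).
Proof.
move=> xP yP wP wx wy; case/and4P: (pmeetP xP yP) => _ _ _ /forall_inP great.
by move/implyP: (great w wP) => /(_ wx) /implyP /(_ wy).
Qed.

Lemma pjoin_idr x y : x \in P -> y \in P -> ple y x -> pjoin P x y = x.
Proof.
move=> xP yP yx; apply: ple_anti; first exact: pjoin_least (ple_refl _) _.
exact: pjoin_l.
Qed.

Lemma pmeet_idr x y : x \in P -> y \in P -> ple y x -> pmeet P x y = y.
Proof.
move=> xP yP yx; apply: ple_anti; first exact: pmeet_r.
exact: pmeet_greatest _ (ple_refl _).
Qed.

Lemma pmeet_meet_le x y z : x \in P -> y \in P -> z \in P -> ple y z ->
  pmeet P (pmeet P x z) y = pmeet P x y.
Proof.
move=> xP yP zP yz; have xzP := pmeet_in xP zP.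
apply: ple_anti.
  apply: pmeet_greatest => //; first exact: pmeet_in.
    exact: ple_trans (pmeet_l _ _) (pmeet_l _ _).
  exact: pmeet_r.
apply: pmeet_greatest => //; [exact: pmeet_in | | exact: pmeet_r].
apply: pmeet_greatest => //; [exact: pmeet_in | exact: pmeet_l |].
exact: ple_trans (pmeet_r _ _) yz.
Qed.

Lemma left_modular_elt_le a b c : left_modular_elt P a ->
  a \in P -> b \in P -> c \in P -> ple b c ->
  pmeet P (pjoin P b a) c = pjoin P b (pmeet P a c).
Proof.
move=> lma aP bP cP bc; case: (eqVneq b c) => [<-|nbc]; last by apply: lma => //; rewrite /plt nbc.
rewrite (pmeet_idr (pjoin_in bP aP) bP (pjoin_l bP aP)).
by rewrite (pjoin_idr bP (pmeet_in aP bP) (pmeet_r aP bP)).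
Qed.

End Lattice.
End Lattices.

(** * Chains *)

Section Chains.
Variable n : nat.
Implicit Types (x y z w : pt n) (P S A : {set pt n}).

Lemma minimal_exists A : A != set0 ->
  exists2 x, x \in A & forall w, w \in A -> ple w x -> w = x.
Proof.
case/set0Pn=> x0 x0A.
case: (@arg_minnP _ x0 (mem A) (fun x => #|[set w in A | ple w x]|) x0A) => x xA xmin.
have {}xA : x \in A := xA.
exists x => // w wA wx; apply/eqP/negPn/negP => nwx.
have := xmin w wA; rewrite leqNgt => /negP; apply.
apply: proper_card; apply/properP; split.
  by apply/subsetP=> v; rewrite !inE => /andP[-> vw]; exact: ple_trans vw wx.
exists x; first by rewrite inE xA ple_refl.
by rewrite inE xA /=; apply: contra nwx => xw; rewrite (ple_anti wx xw).
Qed.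

Lemma maximal_exists A : A != set0 ->
  exists2 x, x \in A & forall w, w \in A -> ple x w -> w = x.
Proof.
case/set0Pn=> x0 x0A.
case: (@arg_minnP _ x0 (mem A) (fun x => #|[set w in A | ple x w]|) x0A) => x xA xmax.
have {}xA : x \in A := xA.
exists x => // w wA xw; apply/eqP/negPn/negP => nwx.
have := xmax w wA; rewrite leqNgt => /negP; apply.
apply: proper_card; apply/properP; split.
  by apply/subsetP=> v; rewrite !inE => /andP[-> wv]; exact: ple_trans xw wv.
exists x; first by rewrite inE xA ple_refl.
by rewrite inE xA /=; apply: contra nwx => wx; rewrite (ple_anti wx xw).
Qed.

Lemma chain_sub P S : chain P S -> S \subset P.
Proof. by case/andP. Qed.

Lemma chain_cmp P S x y : chain P S -> x \in S -> y \in S -> ple x y || ple y x.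
Proof. by case/andP=> _ /forall_inP cmp xS yS; move/forall_inP: (cmp x xS); apply. Qed.

Lemma chainP P S : S \subset P ->
  (forall x y, x \in S -> y \in S -> ple x y || ple y x) -> chain P S.
Proof.
move=> SP cmp; rewrite /chain SP.
by apply/forall_inP=> x xS; apply/forall_inP=> y yS; apply: cmp.
Qed.

Lemma max_chain_mem P S u : max_chain P S -> u \in P ->
  (forall w, w \in S -> ple w u || ple u w) -> u \in S.
Proof.
case=> chS Smax uP cmpu.
have: chain P (u |: S).
  apply: chainP.
    by rewrite subUset sub1set uP (chain_sub chS).
  move=> x y; rewrite !inE => /orP[/eqP->|xS] /orP[/eqP->|yS].
  - by rewrite ple_refl.
  - by rewrite orbC cmpu.
  - by rewrite cmpu.
  - exact: chain_cmp chS xS yS.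
by move/Smax => /(_ (subsetUr _ _)) <-; rewrite setU11.
Qed.

Lemma chain_has_min P S A : chain P S -> A \subset S -> A != set0 ->
  exists2 x, x \in A & forall w, w \in A -> ple x w.
Proof.
move=> chS AS /minimal_exists [x xA xmin]; exists x => // w wA.
case/orP: (chain_cmp chS (subsetP AS x xA) (subsetP AS w wA)) => // wx.
by rewrite (xmin w wA wx) ple_refl.
Qed.

Lemma chain_has_max P S A : chain P S -> A \subset S -> A != set0 ->
  exists2 x, x \in A & forall w, w \in A -> ple w x.
Proof.
move=> chS AS /maximal_exists [x xA xmax]; exists x => // w wA.
case/orP: (chain_cmp chS (subsetP AS x xA) (subsetP AS w wA)) => // xw.
by rewrite (xmax w wA xw) ple_refl.
Qed.

Definition longest P S := chain P S /\ forall S', chain P S' -> #|S'| <= #|S|.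

Lemma spineP P x : reflect (exists2 S, longest P S & x \in S) (x \in spine P).
Proof.
rewrite /spine inE; apply: (iffP andP) => [[_ /existsP [S /and3P [chS xS /forallP Smax]]]|].
  by exists S => //; split => // S'; apply/implyP.
case=> S [chS Smax] xS; split; first exact: subsetP (chain_sub chS) x xS.
by apply/existsP; exists S; rewrite chS xS; apply/forallP => S'; apply/implyP/Smax.
Qed.

Lemma longest_exists P : exists S, longest P S.
Proof.
have ch0 : chain P set0 by apply: chainP => [|x y]; rewrite ?sub0set ?inE.
by case: (@arg_maxnP _ set0 (chain P) (fun S => #|S|) ch0) => S; exists S.
Qed.

Lemma longest_max_chain P S : longest P S -> max_chain P S.
Proof.
case=> chS Smax; split => // S' chS' SS'.
by apply/eqP; rewrite eq_sym eqEcard SS' Smax.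
Qed.

Section LeftModularChain.
Variable P : {set pt n}.
Hypothesis latP : is_lattice P.
Variables (bot top : pt n).
Hypotheses (botP : bot \in P) (topP : top \in P).
Hypotheses (bot_le : forall z, z \in P -> ple bot z) (le_top : forall z, z \in P -> ple z top).
Variable m : {set pt n}.
Hypothesis max_m : max_chain P m.

Let mP : m \subset P. Proof. by case: max_m => /chain_sub. Qed.
Let chm : chain P m. Proof. by case: max_m. Qed.

Lemma max_chain_bot : bot \in m.
Proof. by apply: (max_chain_mem max_m) => // w wm; rewrite bot_le ?orbT ?(subsetP mP). Qed.

Lemma max_chain_top : top \in m.
Proof. by apply: (max_chain_mem max_m) => // w wm; rewrite le_top ?(subsetP mP). Qed.

Lemma max_chain_pred x : x \in m -> x != bot ->
  exists2 x', x' \in m & plt x' x /\ forall w, w \in m -> ple w x' || ple x w.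
Proof.
move=> xm xnb; pose D := [set w in m | plt w x].
have botD : bot \in D.
  by rewrite inE max_chain_bot /plt eq_sym xnb bot_le ?(subsetP mP).
have [x' x'D x'max] : exists2 x', x' \in D & forall w, w \in D -> ple w x'.
  apply: (chain_has_max chm); last by apply/set0Pn; exists bot.
  by apply/subsetP=> w; rewrite inE => /andP[].
move: (x'D); rewrite inE => /andP[x'm x'x]; exists x' => //; split => // w wm.
case/orP: (chain_cmp chm wm xm) => wx; last by rewrite wx orbT.
case: (eqVneq w x) => [->|nwx]; first by rewrite ple_refl orbT.
by rewrite x'max // inE wm /plt nwx.
Qed.

(* [x' \/ (x /\ y)] is comparable with all of [m], and it is not above [x] since [z] is not
   below [y \/ x']. *)
Lemma pred_meet_eq x x' y z : x \in m -> x' \in m -> plt x' x ->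
  (forall w, w \in m -> ple w x' || ple x w) -> y \in P -> z \in P ->
  ple z (pjoin P y x) -> ~~ ple z (pjoin P y x') -> pmeet P x' y = pmeet P x y.
Proof.
move=> xm x'm /andP[_ x'x] predx yP zP zyx zyx'.
have xP := subsetP mP x xm; have x'P := subsetP mP x' x'm.
have tP : pmeet P x y \in P by exact: pmeet_in.
set u := pjoin P x' (pmeet P x y).
have uP : u \in P by exact: pjoin_in.
have ux : ple u x by apply: pjoin_least => //; exact: pmeet_l.
have um : u \in m.
  apply: (max_chain_mem max_m) => // w wm; case/orP: (predx w wm) => wx.
    by rewrite (ple_trans wx) ?pjoin_l.
  by rewrite (ple_trans ux wx) orbT.
case/orP: (predx u um) => [ux'|xu].
  apply: ple_anti; apply: pmeet_greatest => //; try exact: pmeet_r; try exact: pmeet_in.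
    exact: ple_trans (pmeet_l latP x'P yP) x'x.
  exact: ple_trans (pjoin_r latP x'P tP) ux'.
case/negP: zyx'; apply: (ple_trans zyx); apply: pjoin_least => //; try exact: pjoin_in.
  exact: pjoin_l.
apply: (ple_trans xu); apply: pjoin_least => //; try exact: pjoin_in; first exact: pjoin_r.
exact: ple_trans (pmeet_r latP xP yP) (pjoin_l latP yP x'P).
Qed.

Hypothesis lm_m : forall x, x \in m -> left_modular_elt P x.

Lemma lm_meet_neq x x' y z : x \in m -> x' \in m -> y \in P -> z \in P -> plt y z ->
  ple z (pjoin P y x) -> ~~ ple z (pjoin P y x') -> pmeet P x' z != pmeet P x z.
Proof.
move=> xm x'm yP zP yz zyx; apply: contra => /eqP x'xz.
have xP := subsetP mP x xm; have x'P := subsetP mP x' x'm.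
have <- : pmeet P (pjoin P y x') z = z.
  by rewrite (lm_m x'm yP zP yz) x'xz -(lm_m xm yP zP yz) pmeet_idr // pjoin_in.
by rewrite pmeet_l // pjoin_in.
Qed.

Definition chain_meets y := [set pmeet P x y | x in m].

(* [(/\ y)] maps [chain_meets z] onto [chain_meets y]; taking for [x] the first element of [m]
   with [z <= y \/ x] and for [x'] its predecessor, it identifies [x' /\ z != x /\ z]. *)
Lemma card_chain_meets_lt y z : y \in P -> z \in P -> plt y z ->
  #|chain_meets y| < #|chain_meets z|.
Proof.
move=> yP zP yz; have /andP[nyz yLz] := yz.
have meets_yz : chain_meets y = (fun w => pmeet P w y) @: chain_meets z.
  rewrite /chain_meets -imset_comp; apply: eq_in_imset => x xm /=.
  by rewrite pmeet_meet_le // (subsetP mP).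
pose M := [set x in m | ple z (pjoin P y x)].
have [x xM xmin] : exists2 x, x \in M & forall w, w \in M -> ple x w.
  apply: (chain_has_min chm); first by apply/subsetP=> x; rewrite inE => /andP[].
  apply/set0Pn; exists top.
  by rewrite inE max_chain_top (ple_trans (le_top zP)) ?pjoin_r.
move: xM; rewrite inE => /andP[xm zyx]; have xP := subsetP mP x xm.
have xnb : x != bot.
  apply: contraNneq nyz => xb; move: zyx; rewrite xb pjoin_idr ?bot_le // => zy.
  by rewrite (ple_anti yLz zy).
have [x' x'm [x'x predx]] := max_chain_pred xm xnb.
have zyx' : ~~ ple z (pjoin P y x').
  apply: contraT => /negPn zyx'; have /andP[nx'x x'lex] := x'x.
  by case/eqP: nx'x; apply: ple_anti => //; apply: xmin; rewrite inE x'm.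
rewrite meets_yz ltn_neqAle leq_imset_card andbT.
apply/negP => /imset_injP inj; move: (lm_meet_neq xm x'm yP zP yz zyx zyx'); apply/negP/negPn.
apply/eqP/inj; [exact: imset_f x'm | exact: imset_f xm |].
have x'P := subsetP mP x' x'm; rewrite /= !pmeet_meet_le //.
exact: pred_meet_eq xm x'm x'x predx yP zP zyx zyx'.
Qed.

Lemma card_chain_meets_bounds y : 0 < #|chain_meets y| <= #|m|.
Proof.
rewrite leq_imset_card andbT card_gt0; apply/set0Pn.
by exists (pmeet P bot y); apply/imsetP; exists bot => //; exact: max_chain_bot.
Qed.

Lemma lm_max_chain_longest : longest P m.
Proof.
split=> // S chS; rewrite cardE -[#|m|](size_iota 1) -(size_map (fun y => #|chain_meets y|)).
apply: uniq_leq_size.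
  rewrite map_inj_in_uniq ?enum_uniq // => y1 y2; rewrite !mem_enum => y1S y2S e.
  have y1P := subsetP (chain_sub chS) _ y1S; have y2P := subsetP (chain_sub chS) _ y2S.
  apply/eqP; apply: contraT => ny12.
  case/orP: (chain_cmp chS y1S y2S) => [y12|y21].
    by move: (card_chain_meets_lt y1P y2P (introT andP (conj ny12 y12))); rewrite e ltnn.
  have ny21 : y2 != y1 by rewrite eq_sym.
  by move: (card_chain_meets_lt y2P y1P (introT andP (conj ny21 y21))); rewrite e ltnn.
move=> k /mapP[y _ ->]; rewrite mem_iota.
by case/andP: (card_chain_meets_bounds y) => -> /=; rewrite add1n ltnS.
Qed.

End LeftModularChain.
End Chains.

(** * Doubling an interval *)

Section Doubling.
Variables (n i : nat).
Hypothesis lt_i_n : i < n.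
Implicit Types (x y z w : pt n) (S : {set pt n}).

Let oi : 'I_n := Ordinal lt_i_n.

Lemma getcE z : getc z i = z oi.
Proof.
apply/existsP/idP => [[k /andP[/eqP ki zk]]|zi]; last by exists oi; rewrite eqxx.
by have -> : oi = k by apply: val_inj.
Qed.

Lemma setcE z e k : setc z i e k = if k == oi then e else z k.
Proof. by rewrite ffunE. Qed.

Lemma getc_setc_other z j e : j != i -> getc (setc z i e) j = getc z j.
Proof.
move=> ji; apply: eq_existsb => k; rewrite setcE; case: (k =P oi) => // ->.
by rewrite /= eq_sym (negbTE ji).
Qed.

(* [dpt x e] is the pair [(x, e)] of [L x {0<1}], the new coordinate being [i]. *)
Definition dpt x e := setc x i e.
Definition base z := setc z i false.

Lemma getc_dpt x e : getc (dpt x e) i = e.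
Proof. by rewrite getcE setcE eqxx. Qed.

Lemma getc_base z : getc (base z) i = false.
Proof. exact: getc_dpt. Qed.

Lemma base_dpt x e : base (dpt x e) = base x.
Proof. by apply/ffunP=> k; rewrite !setcE; case: eqP. Qed.

Lemma dpt_base z : dpt (base z) (getc z i) = z.
Proof. by apply/ffunP=> k; rewrite !setcE getcE; case: eqP => // ->. Qed.

Lemma base_id x : getc x i = false -> base x = x.
Proof. by rewrite getcE => xi; apply/ffunP=> k; rewrite setcE; case: eqP => // ->. Qed.

Lemma base_getc_inj z w : base z = base w -> getc z i = getc w i -> z = w.
Proof. by move=> eb eg; rewrite -(dpt_base z) -(dpt_base w) eb eg. Qed.

Lemma ple_dpt_base x y e f : ple (dpt x e) (dpt y f) = ple (base x) (base y) && (e ==> f).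
Proof.
apply/forallP/andP => [le_xy|[/forallP le_b ef] k].
  split; last by move: (le_xy oi); rewrite !setcE eqxx.
  by apply/forallP=> k; move: (le_xy k); rewrite !setcE; case: eqP.
by move: (le_b k); rewrite !setcE; case: eqP.
Qed.

Lemma ple_dpt x y e f : getc x i = false -> getc y i = false ->
  ple (dpt x e) (dpt y f) = ple x y && (e ==> f).
Proof. by move=> xi yi; rewrite ple_dpt_base !base_id. Qed.

Lemma dpt_inj x y e f : getc x i = false -> getc y i = false ->
  dpt x e = dpt y f -> x = y /\ e = f.
Proof.
move=> xi yi exy; split; last by rewrite -(getc_dpt x e) exy getc_dpt.
by rewrite -(base_id xi) -(base_id yi) -(base_dpt x e) exy base_dpt.
Qed.

Lemma base_ple z w : ple z w -> ple (base z) (base w).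
Proof. by rewrite -(dpt_base z) -(dpt_base w) ple_dpt_base !base_dpt => /andP[]. Qed.

Lemma getc_ple z w : ple z w -> getc z i ==> getc w i.
Proof. by rewrite -(dpt_base z) -(dpt_base w) ple_dpt_base !getc_dpt => /andP[]. Qed.

Variables (L : {set pt n}) (a b : pt n).
Hypotheses (aL : a \in L) (bL : b \in L) (ab : ple a b).
Hypothesis Lfree : forall z, z \in L -> getc z i = false.
Let Ci := [set x in L | ple a x && ple x b].
Let L' := Defs.double L Ci i.

(* [(x, 1) \in L[C]] iff [x \in (L \ I_L(C)) :|: C], and [(x, 0) \in L[C]] iff [x <= b]. *)
Definition upper x := ple x b ==> ple a x.

Lemma upper_up x y : upper x -> ple x y -> upper y.
Proof.
move=> /implyP ux xy; apply/implyP => yb.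
exact: ple_trans (ux (ple_trans xy yb)) xy.
Qed.

Lemma upper_ge x : ple a x -> upper x.
Proof. by move=> ax; apply/implyP. Qed.

Lemma downsetE : downset L Ci = [set y in L | ple y b].
Proof.
apply/setP=> y; rewrite !inE; case: (y \in L) => //=.
apply/existsP/idP => [[x /andP[]]|yb]; last by exists b; rewrite !inE bL ab ple_refl yb.
by rewrite !inE => /and3P[_ _ xb] yx; exact: ple_trans yx xb.
Qed.

Lemma in_double z : (z \in L') =
  (base z \in L) && (if getc z i then upper (base z) else ple (base z) b).
Proof.
rewrite /L' /Defs.double inE downsetE !inE -/(base z).
case: (getc z i) => /=; rewrite ?orbF // /upper; case: (base z \in L) => //=.
by case: (ple (base z) b); rewrite ?andbT ?orbF.
Qed.

Lemma in_double_dpt x e : getc x i = false ->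
  (dpt x e \in L') = (x \in L) && (if e then upper x else ple x b).
Proof. by move=> xi; rewrite in_double base_dpt getc_dpt (base_id xi). Qed.

Lemma double_elim z : z \in L' ->
  exists x e, [/\ z = dpt x e, x \in L & if e then upper x else ple x b].
Proof.
by rewrite in_double => /andP[xL xe]; exists (base z), (getc z i); rewrite dpt_base.
Qed.

Lemma base_in z : z \in L' -> base z \in L.
Proof. by rewrite in_double => /andP[]. Qed.

Lemma base_le_b z : z \in L' -> getc z i = false -> ple (base z) b.
Proof. by rewrite in_double => /andP[_] + zi; rewrite zi. Qed.

Hypothesis latL : is_lattice L.

Lemma is_lub_double x y e f : dpt x e \in L' -> dpt y f \in L' -> x \in L -> y \in L ->
  is_lub L' (dpt x e) (dpt y f) (dpt (pjoin L x y) (e || f)).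
Proof.
move=> xeL' yfL' xL yL; have xi := Lfree xL; have yi := Lfree yL.
have jL := pjoin_in latL xL yL; have ji := Lfree jL.
move: xeL' yfL'; rewrite !in_double_dpt // xL yL /= => xe yf.
apply/and4P; split.
- rewrite in_double_dpt // jL /=; case: e xe => /= xe.
    exact: upper_up xe (pjoin_l latL xL yL).
  case: f yf => /= yf; first exact: upper_up yf (pjoin_r latL xL yL).
  exact: pjoin_least.
- by rewrite ple_dpt // pjoin_l //=; apply/implyP=> ->.
- by rewrite ple_dpt // pjoin_r //=; apply/implyP=> ->; rewrite orbT.
apply/forall_inP=> _ /double_elim [w [g [-> wL _]]]; have wi := Lfree wL.
rewrite !ple_dpt //; apply/implyP => /andP[xw eg]; apply/implyP => /andP[yw fg].
by rewrite pjoin_least //=; move: eg fg; case: (e); case: (f).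
Qed.

Lemma is_glb_double x y e f : dpt x e \in L' -> dpt y f \in L' -> x \in L -> y \in L ->
  is_glb L' (dpt x e) (dpt y f) (dpt (pmeet L x y) [&& e, f & upper (pmeet L x y)]).
Proof.
move=> xeL' yfL' xL yL; have xi := Lfree xL; have yi := Lfree yL.
have mL := pmeet_in latL xL yL; have mi := Lfree mL.
move: xeL' yfL'; rewrite !in_double_dpt // xL yL /= => xe yf.
apply/and4P; split.
- rewrite in_double_dpt // mL /=.
  case: e xe => /= xe; last exact: ple_trans (pmeet_l latL xL yL) xe.
  case: f yf => /= yf; last exact: ple_trans (pmeet_r latL xL yL) yf.
  by rewrite /upper; case: (ple _ b); case: (ple a _).
- by rewrite ple_dpt // pmeet_l //=; apply/implyP => /and3P[].
- by rewrite ple_dpt // pmeet_r //=; apply/implyP => /and3P[].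
apply/forall_inP=> _ /double_elim [w [g [-> wL wg]]]; have wi := Lfree wL.
rewrite !ple_dpt //; apply/implyP => /andP[wx ge]; apply/implyP => /andP[wy gf].
rewrite pmeet_greatest //=; case: g ge gf wg => //= -> -> /= wg.
exact: upper_up wg (pmeet_greatest latL xL yL wL wx wy).
Qed.

Lemma is_lattice_double : is_lattice L'.
Proof.
move=> u v uL' vL'.
case/double_elim: (uL') => x [e [eu xL _]]; case/double_elim: (vL') => y [f [ev yL _]].
by subst u v; split; eexists; [exact: is_lub_double | exact: is_glb_double].
Qed.

Lemma pjoin_double x y e f : dpt x e \in L' -> dpt y f \in L' -> x \in L -> y \in L ->
  pjoin L' (dpt x e) (dpt y f) = dpt (pjoin L x y) (e || f).
Proof.
by move=> xeL' yfL' xL yL; apply: (pjoin_eq is_lattice_double) => //; exact: is_lub_double.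
Qed.

Lemma pmeet_double x y e f : dpt x e \in L' -> dpt y f \in L' -> x \in L -> y \in L ->
  pmeet L' (dpt x e) (dpt y f) = dpt (pmeet L x y) [&& e, f & upper (pmeet L x y)].
Proof.
by move=> xeL' yfL' xL yL; apply: (pmeet_eq is_lattice_double) => //; exact: is_glb_double.
Qed.

Lemma dpt_pjoin_in x y e f : dpt x e \in L' -> dpt y f \in L' -> x \in L -> y \in L ->
  dpt (pjoin L x y) (e || f) \in L'.
Proof.
by move=> xeL' yfL' xL yL; rewrite -pjoin_double //; exact: (pjoin_in is_lattice_double).
Qed.

Lemma dpt_pmeet_in x y e f : dpt x e \in L' -> dpt y f \in L' -> x \in L -> y \in L ->
  dpt (pmeet L x y) [&& e, f & upper (pmeet L x y)] \in L'.
Proof.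
by move=> xeL' yfL' xL yL; rewrite -pmeet_double //; exact: (pmeet_in is_lattice_double).
Qed.


Lemma lm_of_double x e (g : pt n -> bool) : x \in L -> dpt x e \in L' ->
  (forall p, p \in L -> dpt p (g p) \in L') -> (forall p q, ple p q -> g p ==> g q) ->
  left_modular_elt L' (dpt x e) -> left_modular_elt L x.
Proof.
move=> xL xeL' gL gmono lmx p q pL qL /andP[npq pq].
have pi := Lfree pL; have qi := Lfree qL.
have pq' : plt (dpt p (g p)) (dpt q (g q)).
  apply/andP; split; last by rewrite ple_dpt // pq gmono.
  by apply/eqP => /(dpt_inj pi qi) [epq _]; rewrite epq eqxx in npq.
have pgL := gL p pL; have qgL := gL q qL.
move: (lmx _ _ pgL qgL pq').
have jL := dpt_pjoin_in pgL xeL' pL xL; have mL := dpt_pmeet_in xeL' qgL xL qL.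
rewrite pjoin_double // pmeet_double //; last exact: pjoin_in.
rewrite pmeet_double // pjoin_double //; last exact: pmeet_in.
move/dpt_inj => [] //.
- by apply: Lfree; apply: pmeet_in => //; apply: pjoin_in.
- by apply: Lfree; apply: pjoin_in => //; apply: pmeet_in.
Qed.

Lemma lm_of_double_low x : x \in L -> ple x b ->
  left_modular_elt L' (dpt x false) -> left_modular_elt L x.
Proof.
move=> xL xb; apply: (@lm_of_double x false (fun p => ~~ ple p b)) => //.
- by rewrite in_double_dpt ?Lfree // xL.
- move=> p pL; rewrite in_double_dpt ?Lfree // pL /upper.
  by case: (ple p b).
- by move=> p q pq; apply/implyP; apply: contra => qb; exact: ple_trans pq qb.
Qed.

Lemma lm_of_double_high x : x \in L -> upper x ->
  left_modular_elt L' (dpt x true) -> left_modular_elt L x.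
Proof.
move=> xL ux; apply: (@lm_of_double x true upper) => //.
- by rewrite in_double_dpt ?Lfree // xL.
- move=> p pL; rewrite in_double_dpt ?Lfree // pL /upper.
  by case: (ple p b); case: (ple a p).
- by move=> p q pq; apply/implyP => up; exact: upper_up up pq.
Qed.

Lemma lm_double_low x : x \in L -> ple x b ->
  left_modular_elt L x -> left_modular_elt L' (dpt x false).
Proof.
move=> xL xb lmx _ _ /double_elim [p [e [-> pL pe]]] /double_elim [q [f [-> qL qf]]].
have pi := Lfree pL; have qi := Lfree qL; have xi := Lfree xL.
have peL : dpt p e \in L' by rewrite in_double_dpt // pL.
have qfL : dpt q f \in L' by rewrite in_double_dpt // qL.
have x0L : dpt x false \in L' by rewrite in_double_dpt // xL.
case/andP=> _; rewrite ple_dpt // => /andP[pq ef].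
have jL := dpt_pjoin_in peL x0L pL xL; have mL := dpt_pmeet_in x0L qfL xL qL.
rewrite orbF in jL.
rewrite pjoin_double // orbF pmeet_double //; last exact: pjoin_in.
rewrite pmeet_double // /= pjoin_double //; last exact: pmeet_in.
rewrite orbF (left_modular_elt_le latL) //; congr dpt.
case: e ef pe {peL jL} => //= -> up /=.
apply: upper_up up _; apply: pjoin_l => //; exact: pmeet_in.
Qed.

Lemma lm_double_high x : x \in L -> ple a x ->
  left_modular_elt L x -> left_modular_elt L' (dpt x true).
Proof.
move=> xL ax lmx _ _ /double_elim [p [e [-> pL pe]]] /double_elim [q [f [-> qL qf]]].
have pi := Lfree pL; have qi := Lfree qL; have xi := Lfree xL.
have peL : dpt p e \in L' by rewrite in_double_dpt // pL.
have qfL : dpt q f \in L' by rewrite in_double_dpt // qL.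
have x1L : dpt x true \in L' by rewrite in_double_dpt // xL /=; exact: upper_ge.
case/andP=> _; rewrite ple_dpt // => /andP[pq ef].
have jL := dpt_pjoin_in peL x1L pL xL; have mL := dpt_pmeet_in x1L qfL xL qL.
have xqL : pmeet L x q \in L by exact: pmeet_in.
have pxqL : pjoin L p (pmeet L x q) \in L by exact: pjoin_in.
rewrite orbT in jL.
rewrite pjoin_double // orbT pmeet_double //; last exact: pjoin_in.
rewrite pmeet_double // pjoin_double // (left_modular_elt_le latL) //; congr dpt => /=.
case: e ef pe {peL jL} => /= [-> up|_ pb]; first by apply: upper_up up _; apply: pjoin_l.
case: f {qfL mL qf} => //=; apply/idP/idP => [up|]; last by move/upper_up; apply; apply: pjoin_r.
apply/implyP => xqb; apply: pmeet_greatest => //.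
have pxqb : ple (pjoin L p (pmeet L x q)) b by apply: pjoin_least.
move/implyP: up => /(_ pxqb) /ple_trans; apply.
by apply: pjoin_least => //; exact: pmeet_r.
Qed.

(* The pair [(b, 0) < (b, 1)] witnesses the failure of left modularity of [(x, 1)] otherwise. *)
Lemma lm_double_high_ge x : x \in L -> upper x ->
  left_modular_elt L' (dpt x true) -> ple a x.
Proof.
move=> xL ux lmx; apply: contraT => nax.
have bi := Lfree bL; have xi := Lfree xL.
have x1L : dpt x true \in L' by rewrite in_double_dpt // xL.
have b0L : dpt b false \in L' by rewrite in_double_dpt // bL ple_refl.
have b1L : dpt b true \in L' by rewrite in_double_dpt // bL /=; exact: upper_ge.
have : plt (dpt b false) (dpt b true).
  apply/andP; split; first by apply/eqP => /(dpt_inj bi bi) [].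
  by rewrite ple_dpt // ple_refl.
move/(lmx _ _ b0L b1L).
have jL := dpt_pjoin_in b0L x1L bL xL; have mL := dpt_pmeet_in x1L b1L xL bL.
rewrite pjoin_double // pmeet_double //; last exact: pjoin_in.
rewrite pmeet_double // pjoin_double //; last exact: pmeet_in.
have -> : upper (pmeet L x b) = false.
  rewrite /upper pmeet_r //=; apply: contraNF nax => /ple_trans; apply.
  exact: pmeet_l.
move/(congr1 (fun z => getc z i)); rewrite !getc_dpt /= pmeet_idr //.
- by rewrite /upper ab implybT.
- exact: pjoin_in.
- exact: pjoin_l.
Qed.

Lemma base_chain S : chain L' S -> chain L (base @: S).
Proof.
move=> chS; apply: chainP.
  by apply/subsetP=> _ /imsetP [z zS ->]; apply: base_in; exact: (subsetP (chain_sub chS)).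
move=> _ _ /imsetP [z zS ->] /imsetP [w wS ->].
by case/orP: (chain_cmp chS zS wS) => /base_ple ->; rewrite ?orbT.
Qed.

Lemma chain_doubled_uniq S z0 z1 w0 w1 : chain L' S ->
  z0 \in S -> z1 \in S -> w0 \in S -> w1 \in S ->
  ~~ getc z0 i -> getc z1 i -> ~~ getc w0 i -> getc w1 i ->
  base z0 = base z1 -> base w0 = base w1 -> base z0 = base w0.
Proof.
move=> chS z0S z1S w0S w1S z0i z1i w0i w1i ez ew; apply: ple_anti.
  case/orP: (chain_cmp chS z0S w1S) => [/base_ple|/getc_ple]; first by rewrite ew.
  by rewrite w1i (negbTE z0i).
case/orP: (chain_cmp chS w0S z1S) => [/base_ple|/getc_ple]; first by rewrite ez.
by rewrite z1i (negbTE w0i).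
Qed.

Lemma card_chain_base S : chain L' S -> #|S| <= (#|base @: S|).+1.
Proof.
move=> chS; pose T := [set z : pt n | getc z i].
have baseI e : {in [set z in S | getc z i == e] &, injective base}.
  move=> z w; rewrite !inE => /andP[_ /eqP zi] /andP[_ /eqP wi] ezw.
  by apply: base_getc_inj ezw _; rewrite zi wi.
have ST : S :&: T = [set z in S | getc z i == true].
  by apply/setP=> z; rewrite !inE eqb_id.
have SnT : S :\: T = [set z in S | getc z i == false].
  by apply/setP=> z; rewrite !inE eqbF_neg andbC.
have card_split : #|S| = #|base @: (S :\: T)| + #|base @: (S :&: T)|.
  by rewrite -(cardsID T S) addnC ST SnT (card_in_imset (baseI true)) (card_in_imset (baseI false)).
have shared_le1 : #|base @: (S :\: T) :&: base @: (S :&: T)| <= 1.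
  apply/card_le1_eqP => u v; rewrite !inE.
  move=> /andP[/imsetP[z0 z0S ->] /imsetP[z1 z1S ez]] /andP[/imsetP[w0 w0S ->] /imsetP[w1 w1S ew]].
  move: z0S z1S w0S w1S; rewrite !inE.
  move=> /andP[z0i z0S] /andP[z1S z1i] /andP[w0i w0S] /andP[w1S w1i].
  by apply/esym; exact: (chain_doubled_uniq chS z0S z1S w0S w1S).
by rewrite card_split -cardsUI -imsetU setUC setID -addn1 leq_add2l.
Qed.

Lemma base_noninj_pair S : #|base @: S| < #|S| ->
  exists z0 z1, [/\ z0 \in S, z1 \in S, base z0 = base z1, getc z0 i = false & getc z1 i].
Proof.
move=> lt_base.
have /existsP [z /andP [zS /existsP [w /and3P [wS /eqP ezw nzw]]]] :
    [exists z in S, exists w in S, (base z == base w) && (z != w)].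
  apply: contraLR lt_base => /existsPn none; rewrite -leqNgt (card_in_imset _) //.
  move=> z w zS wS ezw; apply/eqP; apply: contraT => nzw.
  by case/negP: (none z); rewrite zS; apply/existsP; exists w; rewrite wS ezw eqxx.
have nzwi : getc z i != getc w i by apply: contra nzw => /eqP /(base_getc_inj ezw) ->.
case: (boolP (getc z i)) nzwi => zi; case: (boolP (getc w i)) => //= wi _.
  by exists w, z; split; rewrite ?(negbTE wi).
by exists z, w; split; rewrite ?(negbTE zi).
Qed.

(* Lift the chain along [s |-> (s, ~~ (s <= x))] and add [(x, 1)] on top of [(x, 0)]. *)
Lemma double_chain_through S x : chain L S -> x \in S -> ple a x -> ple x b ->
  exists2 S', chain L' S' & #|S'| = #|S|.+1.
Proof.
move=> chS xS ax xb; have SL := chain_sub chS; have xL := subsetP SL x xS.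
have xi := Lfree xL.
pose lift s := dpt s (~~ ple s x).
have liftL s : s \in S -> lift s \in L'.
  move=> sS; have sL := subsetP SL s sS; rewrite /lift in_double_dpt ?Lfree // sL.
  case: (boolP (ple s x)) => /= sx; first exact: ple_trans sx xb.
  case/orP: (chain_cmp chS sS xS) => xs; first by rewrite xs in sx.
  by apply: upper_ge; apply: ple_trans ax xs.
have lift_ple s t : s \in S -> t \in S -> ple s t -> ple (lift s) (lift t).
  move=> sS tS st; rewrite /lift ple_dpt ?Lfree ?(subsetP SL) // st /=.
  by apply/implyP; apply: contra => tx; apply: ple_trans st tx.
have lift_x1 s : s \in S -> ple (lift s) (dpt x true) || ple (dpt x true) (lift s).
  move=> sS; rewrite /lift !ple_dpt ?Lfree ?(subsetP SL) //.
  case: (boolP (ple s x)) => //= sx.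
  by rewrite andbT; case/orP: (chain_cmp chS sS xS) => // sx'; rewrite sx' in sx.
exists (dpt x true |: lift @: S).
  apply: chainP.
    rewrite subUset sub1set in_double_dpt // xL upper_ge //=.
    by apply/subsetP=> _ /imsetP [s sS ->]; exact: liftL.
  move=> z w; rewrite !inE => /orP[/eqP ->|/imsetP[s sS ->]] /orP[/eqP ->|/imsetP[t tS ->]].
  - by rewrite ple_refl.
  - by rewrite orbC lift_x1.
  - exact: lift_x1.
  - case/orP: (chain_cmp chS sS tS) => [st|ts]; first by rewrite lift_ple.
    by rewrite (lift_ple _ _ tS sS ts) orbT.
rewrite cardsU1 card_in_imset => [|s t sS tS]; last first.
  by case/(dpt_inj (Lfree (subsetP SL s sS)) (Lfree (subsetP SL t tS))).
suff -> : dpt x true \notin lift @: S by [].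
apply/imsetP => [[s sS /(dpt_inj xi (Lfree (subsetP SL s sS))) [<-]]].
by rewrite ple_refl.
Qed.

Lemma longest_double_base S' : (exists x, x \in Ci /\ x \in spine L) -> longest L' S' ->
  longest L (base @: S') /\ #|base @: S'| < #|S'|.
Proof.
move=> [x [xC /spineP [S [chS Smax] xS]]] [chS' S'max].
move: xC; rewrite inE => /and3P[_ ax xb].
have [S1 chS1 cardS1] := double_chain_through chS xS ax xb.
have S_lt_S' : #|S| < #|S'| by rewrite -cardS1 S'max.
have base_le_S : #|base @: S'| <= #|S| by apply: Smax; exact: base_chain.
split; last exact: leq_ltn_trans base_le_S S_lt_S'.
split; first exact: base_chain.
move=> S2 /Smax S2_le; apply: leq_trans S2_le _.
by rewrite -ltnS; apply: leq_trans S_lt_S' (card_chain_base chS').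
Qed.

Lemma spine_lm_double : (forall x, x \in spine L -> left_modular_elt L x) ->
  (exists x, x \in Ci /\ x \in spine L) ->
  forall y, y \in spine L' -> left_modular_elt L' y.
Proof.
move=> lm_spine meetC y /spineP [S' longS' yS'].
have [longB lt_base] := longest_double_base meetC longS'.
have yL' := subsetP (chain_sub longS'.1) y yS'.
have /lm_spine lmy : base y \in spine L by apply/spineP; exists (base @: S') => //; exact: imset_f.
rewrite -(dpt_base y); move: (yL'); rewrite in_double.
case: (boolP (getc y i)) => yi /andP[yL yup]; last exact: lm_double_low.
apply: lm_double_high => //.
have [z0 [z1 [z0S z1S ez z0i z1i]]] := base_noninj_pair lt_base.
have [z0L' z1L'] := (subsetP (chain_sub longS'.1) z0 z0S, subsetP (chain_sub longS'.1) z1 z1S).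
have z0b : ple (base z0) b by exact: base_le_b.
have az0 : ple a (base z0).
  by move: z1L'; rewrite in_double z1i -ez => /andP[_ /implyP]; apply.
case/orP: (chain_cmp longS'.1 z0S yS') => [/base_ple|/getc_ple]; first exact: ple_trans.
by rewrite yi z0i.
Qed.

Section LowestDoubled.
Variable m' : {set pt n}.
Hypotheses (max_m' : max_chain L' m') (lm_m' : forall z, z \in m' -> left_modular_elt L' z).
Variable y' : pt n.
Hypotheses (y'm : y' \in m') (y'i : getc y' i).
Hypothesis y'min : forall z, z \in m' -> getc z i -> ple y' z.

Let chm' : chain L' m'. Proof. by case: max_m'. Qed.
Let m'L : m' \subset L'. Proof. exact: chain_sub chm'. Qed.
Let y := base y'.
Let yL : y \in L. Proof. exact: base_in (subsetP m'L _ y'm). Qed.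
Let y'E : y' = dpt y true. Proof. by rewrite -(dpt_base y') y'i. Qed.

Lemma lowest_le_high z : z \in m' -> getc z i -> ple y (base z).
Proof. by move=> zm zi; apply/base_ple/y'min. Qed.

Lemma low_le_lowest z : z \in m' -> getc z i = false -> ple (base z) y.
Proof.
move=> zm zi; case/orP: (chain_cmp chm' zm y'm) => [/base_ple //|/getc_ple].
by rewrite y'i zi.
Qed.

Lemma lowest_ge_a : ple a y.
Proof.
have y'L := subsetP m'L _ y'm; move: (y'L); rewrite y'E in_double_dpt ?Lfree // => /andP[_ uy].
by apply: (lm_double_high_ge yL uy); rewrite -y'E; exact: lm_m'.
Qed.

(* Otherwise [(y /\ b, 1)] would be a smaller high element of [m']. *)
Lemma lowest_le_b : ple y b.
Proof.
set u := pmeet L y b.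
have uL : u \in L by exact: pmeet_in.
have ui := Lfree uL; have uy : ple u y by exact: pmeet_l.
have u1L' : dpt u true \in L'.
  by rewrite in_double_dpt // uL upper_ge // pmeet_greatest // lowest_ge_a.
have u1m : dpt u true \in m'.
  apply: (max_chain_mem max_m') => // z zm.
  rewrite -(dpt_base z) !ple_dpt ?getc_base //.
  case: (boolP (getc z i)) => zi; first by rewrite (ple_trans uy (lowest_le_high zm zi)) orbT.
  have zi' := negbTE zi.
  rewrite /= andbT andbF orbF /u; apply: pmeet_greatest => //.
  - exact: base_in (subsetP m'L _ zm).
  - exact: low_le_lowest.
  - exact: base_le_b (subsetP m'L _ zm) zi'.
move: (y'min u1m (getc_dpt u true)); rewrite y'E ple_dpt ?Lfree // => /andP[yu _].
exact: ple_trans yu (pmeet_r latL yL bL).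
Qed.

Lemma lm_base_chain w : w \in base @: m' -> left_modular_elt L w.
Proof.
move=> /imsetP [z zm ->]; have zL' := subsetP m'L _ zm; have zL := base_in zL'.
case: (boolP (getc z i)) => zi.
  apply: lm_of_double_high => //; first by move: zL'; rewrite in_double zi => /andP[].
  by rewrite -zi dpt_base; exact: lm_m'.
have zi' := negbTE zi; apply: lm_of_double_low => //; first exact: base_le_b.
by rewrite -zi' dpt_base; exact: lm_m'.
Qed.

(* An element [s] comparable with [base @: m'] lifts into [m'] as [(s, 0)] exactly when
   [s <= b] and [s] is not above [y]. *)
Lemma max_chain_base : max_chain L (base @: m').
Proof.
split; first exact: base_chain.
move=> S chS mS; apply/eqP; rewrite eqEsubset mS andbT; apply/subsetP => s sS.
have sL := subsetP (chain_sub chS) _ sS; have si := Lfree sL.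
set low := ple s b && ~~ ple y s.
have sL' : dpt s (~~ low) \in L'.
  rewrite in_double_dpt // sL /= /low /upper.
  case: (boolP (ple s b)) => //= sb; case: (boolP (ple y s)) => //= ys.
  exact: ple_trans lowest_ge_a ys.
suff sm : dpt s (~~ low) \in m' by rewrite -(base_id si) -(base_dpt s (~~ low)) imset_f.
apply: (max_chain_mem max_m' sL') => z zm.
have cmp : ple s (base z) || ple (base z) s.
  by apply: (chain_cmp chS sS); rewrite (subsetP mS) ?imset_f.
rewrite -(dpt_base z) !ple_dpt ?getc_base // /low.
case: (boolP (getc z i)) => zi.
  have yz := lowest_le_high zm zi.
  case: (boolP (ple s b)) => sb; case: (boolP (ple y s)) => ys;
    case/orP: cmp => h; rewrite ?h ?andbT ?orbT //=.
  by move: ys; rewrite (ple_trans yz h).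
have zi' := negbTE zi.
have zy := low_le_lowest zm zi'; have zb := base_le_b (subsetP m'L _ zm) zi'.
case: (boolP (ple s b)) => sb; case: (boolP (ple y s)) => ys;
  case/orP: cmp => h; rewrite ?h ?andbT ?orbT //=.
- by rewrite (ple_trans zy ys).
- by move: sb; rewrite (ple_trans h zb).
- by move: sb; rewrite (ple_trans h zb).
Qed.

End LowestDoubled.

Lemma lm_double_meets_spine bot top : bot \in L -> top \in L ->
  (forall z, z \in L -> ple bot z) -> (forall z, z \in L -> ple z top) ->
  left_modular L' -> left_modular L /\ exists x, x \in Ci /\ x \in spine L.
Proof.
move=> botL topL bot_le le_top [m' [max_m' lm_m']]; have chm' := max_m'.1.
have topi := Lfree topL.
have top1m : dpt top true \in m'.
  apply: (max_chain_mem max_m') => [|z /(subsetP (chain_sub chm'))].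
    by rewrite in_double_dpt // topL upper_ge ?le_top.
  by case/double_elim=> w [g [-> wL _]]; rewrite ple_dpt ?Lfree // le_top ?implybT.
have [y' y'H y'min] : exists2 y', y' \in [set z in m' | getc z i] &
    forall z, z \in [set z in m' | getc z i] -> ple y' z.
  apply: (chain_has_min chm'); first by apply/subsetP=> z; rewrite inE => /andP[].
  by apply/set0Pn; exists (dpt top true); rewrite inE top1m getc_dpt.
move: y'H; rewrite inE => /andP[y'm y'i].
have {}y'min z : z \in m' -> getc z i -> ple y' z by move=> zm zi; apply: y'min; rewrite inE zm.
have max_m := max_chain_base max_m' lm_m' y'm y'i y'min.
have lm_m := lm_base_chain max_m' lm_m'.
split; first by exists (base @: m').
exists (base y'); split.
  rewrite inE base_in ?(subsetP (chain_sub chm')) //=.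
  by rewrite (lowest_ge_a max_m' lm_m') ?(lowest_le_b max_m' lm_m').
apply/spineP; exists (base @: m'); last exact: imset_f.
exact: (lm_max_chain_longest latL botL topL bot_le le_top max_m lm_m).
Qed.


End Doubling.

(** * Iterated doubling *)

Section IteratedDoubling.
Variable n : nat.
Implicit Types (L : {set pt n}).

Lemma getc_bot j : getc (bot_pt n) j = false.
Proof. by apply/existsP => [[k]]; rewrite ffunE andbF. Qed.

Definition supported_lattice L k := [/\ is_lattice L, bot_pt n \in L,
  exists2 t, t \in L & (forall z, z \in L -> ple z t) &
  forall z, z \in L -> forall j, k <= j -> getc z j = false].

Lemma is_lattice_set1 (x : pt n) : is_lattice [set x].
Proof.
move=> _ _ /set1P -> /set1P ->; split; exists x; apply/and4P; split; rewrite ?inE ?ple_refl //.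
  by apply/forall_inP => w _; apply/implyP => xw; apply/implyP.
by apply/forall_inP => w /set1P ->; rewrite ple_refl.
Qed.

Lemma supported_lattice_double L Ci i : i < n -> supported_lattice L i ->
  is_interval L Ci -> supported_lattice (Defs.double L Ci i) i.+1.
Proof.
move=> lt_i_n [latL botL [t tL le_t] Lfree] [a [b [aL bL ab ->]]].
have Lfree_i z : z \in L -> getc z i = false by move=> zL; exact: Lfree zL i (leqnn i).
split.
- exact: is_lattice_double.
- rewrite -(base_id lt_i_n (getc_bot i)) -/(dpt i _ false).
  by rewrite in_double_dpt ?getc_bot // botL ple_bot.
- exists (dpt i t true); first by rewrite in_double_dpt ?Lfree_i // tL upper_ge ?le_t.
  move=> z; rewrite in_double // => /andP[zL _].
  by rewrite -(dpt_base lt_i_n z) ple_dpt ?getc_base ?(Lfree_i _ tL) // le_t ?implybT.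
move=> z; rewrite in_double // => /andP[zL _] j ij.
rewrite -(dpt_base lt_i_n z) (getc_setc_other lt_i_n); first exact: Lfree zL j (ltnW ij).
by rewrite neq_ltn ij orbT.
Qed.

Variable C : nat -> {set pt n}.
Hypothesis C_interval : forall i, i < n -> is_interval (Elat C i) (C i).

Lemma supported_Elat k : k <= n -> supported_lattice (Elat C k) k.
Proof.
elim: k => [_|k IHk lt_k_n].
  split; rewrite /= ?inE //; first exact: is_lattice_set1.
    by exists (bot_pt n); rewrite ?inE // => z /set1P ->; rewrite ple_refl.
  by move=> z /set1P -> j _; rewrite getc_bot.
exact: supported_lattice_double (IHk (ltnW lt_k_n)) (C_interval lt_k_n).
Qed.

Definition meets_spine i := exists x, x \in C i /\ x \in spine (Elat C i).

Lemma spine_lm_Elat k : k <= n -> (forall i, i < k -> meets_spine i) ->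
  forall x, x \in spine (Elat C k) -> left_modular_elt (Elat C k) x.
Proof.
elim: k => [_ _ x _ b c|k IHk lt_k_n meets].
  by rewrite !inE => /eqP -> /eqP -> /andP[]; rewrite eqxx.
have [latL _ _ Lfree] := supported_Elat (ltnW lt_k_n).
have [a [b [aL bL ab eC]]] := C_interval lt_k_n.
have := meets k (ltnSn k); rewrite /meets_spine /= eC => meetC.
apply: spine_lm_double (fun z zL => Lfree z zL k (leqnn k)) latL _ meetC => //.
exact: IHk (ltnW lt_k_n) (fun i lt_ik => meets i (ltnW lt_ik)).
Qed.

Lemma meets_spine_of_lm_Elat k : k <= n -> left_modular (Elat C k) ->
  forall i, i < k -> meets_spine i.
Proof.
elim: k => [//|k IHk lt_k_n].
have [latL botL [t tL le_t] Lfree] := supported_Elat (ltnW lt_k_n).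
have [a [b [aL bL ab eC]]] := C_interval lt_k_n.
have Lfree_k z : z \in Elat C k -> getc z k = false by move=> zL; exact: Lfree z zL k (leqnn k).
have bot_le z : z \in Elat C k -> ple (bot_pt n) z by move=> _; exact: ple_bot.
rewrite /= eC => /(lm_double_meets_spine lt_k_n aL bL ab Lfree_k latL botL tL bot_le le_t).
case=> lmL meetC i.
rewrite ltnS leq_eqVlt => /orP[/eqP ->|lt_ik]; first by rewrite /meets_spine eC.
exact: IHk (ltnW lt_k_n) lmL i lt_ik.
Qed.

End IteratedDoubling.

Theorem corollary3p21 (n : nat) (C : nat -> {set pt n}) :
  (forall i, i < n -> is_interval (Elat C i) (C i)) ->
  (left_modular (Elat C n) <->
   (forall i, i < n -> exists x, x \in C i /\ x \in spine (Elat C i))).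
Proof.
move=> C_int; split; first exact: (meets_spine_of_lm_Elat C_int (leqnn n)).
move=> meets; have lm_spine := spine_lm_Elat C_int (leqnn n) meets.
have [S longS] := longest_exists (Elat C n).
exists S; split; first exact: longest_max_chain.
by move=> x xS; apply: lm_spine; apply/spineP; exists S.
Qed.
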